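(* For any random variable $X$ with values in a finite set $\mathcal{X}$, any $\delta\ge 0$ and any real $k$, $$\mathrm{H}^{\delta}_\infty(X)\ge k\iff\sum_{x\in\mathcal{X}}\max\left(P_X(x)-2^{-k},0\right)\le\delta.$$
   Context: $P_X(x)=\Pr[X=x]$. Min-entropy: $\mathrm{H}_\infty(Y)=-\log_2\max_y P_Y(y)$. The statistical distance of finitely supported distributions $X,Y$ is $d_1(X;Y)=\frac12\sum_z|P_X(z)-P_Y(z)|$ (sum over the union of supports). Smooth min-entropy: $\mathrm{H}^{\delta}_\infty(X)=\max\{\mathrm{H}_\infty(Y): Y \text{ finitely supported},\ d_1(X;Y)\le\delta\}$. *)

From HB Require Import structures.
From mathcomp Require Import all_boot all_order all_algebra.
From mathcomp Require Import finmap.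
From mathcomp Require Import all_classical all_reals all_analysis.
Set Implicit Arguments. Unset Strict Implicit. Unset Printing Implicit Defensive.
Import Order.TTheory GRing.Theory Num.Theory.
Local Open Scope ring_scope.

Section Defs.
Variables (R : realType) (T : choiceType).

Definition is_fsdist (Q : T -> R) (S : {fset T}) : Prop :=
  (forall x, 0 <= Q x) /\ (forall x, x \notin S -> Q x = 0) /\
  \sum_(x <- S) Q x = 1.

(* statistical distance; S must contain the union of the two supports *)
Definition dist1 (P Q : T -> R) (S : {fset T}) : R :=
  2^-1 * \sum_(z <- S) `|P z - Q z|.

Definition log2 (x : R) : R := ln x / ln 2.

Definition Hmin (Q : T -> R) (S : {fset T}) : R :=
  - log2 (\big[Num.max/0]_(y <- S) Q y).

Definition smooth_cands (P : T -> R) (X : {fset T}) (delta : R) : set R :=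
  [set r | exists (Q : T -> R) (S : {fset T}),
     is_fsdist Q S /\ dist1 P Q (fsetU S X) <= delta /\ r = Hmin Q S].

Definition Hsmooth (P : T -> R) (X : {fset T}) (delta : R) : \bar R :=
  ereal_sup [set r%:E | r in smooth_cands P X delta].
End Defs.

(** Put [c = 2^-k] and let [excess c = sum_x (P x - c)^+] be the mass of [P]
    above level [c].  For distributions, [d1(P, Q) = sum_x (P x - Q x)^+], so a
    [Q] bounded by [m] is at distance at least [excess m] from [P]: every
    admissible [Q] has [excess (max Q) <= delta].  If [excess c > delta], the
    Lipschitz continuity of [excess] forces [max Q >= c + eta] for a fixed
    [eta > 0], which keeps the supremum strictly below [k].  Conversely,
    capping [P] at [c] and spreading the removed mass [excess c] uniformly over
    at least [1/c] points outside the support (this is where [T] must be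
    infinite) gives a [Q] bounded by [c] at distance exactly [excess c]. *)

From HB Require Import structures.
From mathcomp Require Import all_boot all_order all_algebra.
From mathcomp Require Import finmap.
From mathcomp Require Import all_classical all_reals all_analysis.
From mathcomp Require Import lra.
Set Implicit Arguments. Unset Strict Implicit. Unset Printing Implicit Defensive.
Import Order.TTheory GRing.Theory Num.Theory.
Local Open Scope ring_scope.

Section RealDomain.
Variable F : realDomainType.

Lemma normr_max0 (a : F) : `|a| = Num.max a 0 *+ 2 - a.
Proof. by have [a0|a0] := leP a 0; [rewrite ler0_norm | rewrite gtr0_norm]; lra. Qed.

Lemma subr_min (a c : F) : a - Num.min a c = Num.max (a - c) 0.
Proof. by have [ac|ac] := leP a c; have [|] := leP (a - c) 0; lra. Qed.

End RealDomain.

Section Log2.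
Variable R : realType.

Let ln2_gt0 : 0 < ln (2 : R).
Proof. by apply: ln_gt0; lra. Qed.

Lemma log2_powR2 (a : R) : log2 (2 `^ a) = a.
Proof. by rewrite /log2 ln_powR mulfK ?gt_eqF. Qed.

Lemma ler_log2 : {in Num.pos &, {mono @log2 R : x y / x <= y}}.
Proof. by move=> x y x0 y0; rewrite /log2 ler_pM2r ?invr_gt0 // ler_ln. Qed.

Lemma ltr_log2 : {in Num.pos &, {mono @log2 R : x y / x < y}}.
Proof. exact: leW_mono_in ler_log2. Qed.

End Log2.

Section SmoothMinEntropy.
Variables (R : realType) (T : choiceType).
Implicit Types (P Q : T -> R) (X S B : {fset T}) (c m : R).

Lemma fsdist_ge0 Q S : is_fsdist Q S -> forall y, 0 <= Q y.
Proof. by case. Qed.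

Lemma fsdist_supp Q S : is_fsdist Q S -> forall y, y \notin S -> Q y = 0.
Proof. by case=> _ []. Qed.

Lemma fsdist_sum_incl Q S B : is_fsdist Q S -> (S `<=` B)%fset ->
  \sum_(y <- B) Q y = 1.
Proof.
move=> [_ [QS <-]] SB; apply/esym/big_fset_incl => // y _; exact: QS.
Qed.

Lemma le_bigmax_fsdist Q S : is_fsdist Q S ->
  forall y, Q y <= \big[Num.max/0]_(z <- S) Q z.
Proof.
move=> HQ y; have [yS|yS] := boolP (y \in S); first exact: le_bigmax_seq.
by rewrite (fsdist_supp HQ) // bigmax_ge_id.
Qed.

Lemma fsdist_has_pos Q S : is_fsdist Q S -> exists2 y, y \in S & 0 < Q y.
Proof.
move=> HQ; apply/hasP; apply: contraT; rewrite -all_predC => /allP Qle0.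
have : \sum_(y <- S) Q y <= 0.
  by rewrite big_seq; apply: sumr_le0 => y /Qle0 /=; rewrite -leNgt.
by rewrite (fsdist_sum_incl HQ (fsubset_refl S)) ler10.
Qed.

Lemma bigmax_fsdist_gt0 Q S : is_fsdist Q S -> 0 < \big[Num.max/0]_(z <- S) Q z.
Proof.
move=> HQ; have [y _ Qy] := fsdist_has_pos HQ.
exact: lt_le_trans Qy (le_bigmax_fsdist HQ y).
Qed.

Lemma le_Hmin Q S c : is_fsdist Q S -> (forall y, Q y <= c) ->
  - log2 c <= Hmin Q S.
Proof.
move=> HQ Qc; have [y _ Qy] := fsdist_has_pos HQ.
have c0 : 0 < c := lt_le_trans Qy (Qc y).
have Mc : \big[Num.max/0]_(z <- S) Q z <= c by apply: bigmax_le => //; exact: ltW.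
by rewrite /Hmin lerN2 ler_log2 ?posrE // bigmax_fsdist_gt0.
Qed.

(** As [P] and [Q] have the same mass, [|P - Q|] sums to twice the positive
    part of [P - Q]; the latter vanishes outside the support of [P]. *)
Lemma dist1_fsdistE P Q X S : is_fsdist P X -> is_fsdist Q S ->
  dist1 P Q (S `|` X)%fset = \sum_(x <- X) Num.max (P x - Q x) 0.
Proof.
move=> HP HQ; rewrite /dist1 (eq_bigr _ (fun x _ => normr_max0 _)).
rewrite sumrB sumrMnl sumrB (fsdist_sum_incl HP) ?fsubsetUr //.
rewrite (fsdist_sum_incl HQ) ?fsubsetUl // subrr subr0.
rewrite mulrC -[_ *+ 2]mulr_natr mulfK ?pnatr_eq0 //; apply/esym/big_fset_incl.
  exact: fsubsetUr.
move=> x _ xX; rewrite (fsdist_supp HP xX) sub0r max_r // oppr_le0.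
exact: fsdist_ge0 HQ x.
Qed.

Definition excess P X c : R := \sum_(x <- X) Num.max (P x - c) 0.

Lemma excess_ge0 P X c : 0 <= excess P X c.
Proof. by apply: sumr_ge0 => x _; rewrite le_max lexx orbT. Qed.

Lemma excess_le1 P X c : is_fsdist P X -> 0 <= c -> excess P X c <= 1.
Proof.
move=> HP c0; rewrite -(fsdist_sum_incl HP (fsubset_refl X)).
apply: ler_sum => x _; rewrite ge_max (fsdist_ge0 HP) andbT; lra.
Qed.

Lemma excess_le_shift P X c m :
  excess P X c <= excess P X m + Num.max (m - c) 0 *+ size X.
Proof.
rewrite /excess -iter_addr_0 -count_predT -big_const_seq -big_split /=.
apply: ler_sum => x _.
by have [] := leP (P x - c) 0; have [] := leP (P x - m) 0; have [] := leP (m - c) 0; lra.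
Qed.

Lemma excess_le_dist1 P Q X S m : is_fsdist P X -> is_fsdist Q S ->
  (forall y, Q y <= m) -> excess P X m <= dist1 P Q (S `|` X)%fset.
Proof.
move=> HP HQ Qm; rewrite (dist1_fsdistE HP HQ); apply: ler_sum => x _.
by apply: le_max2 => //; rewrite lerB.
Qed.

Definition capped_fsdist P X B c y : R :=
  (if y \in X then Num.min (P y) c else 0) +
  (if y \in B then excess P X c / (size B)%:R else 0).

Section CappedFsdist.
Variables (P : T -> R) (X B : {fset T}) (c : R).
Hypotheses (HP : is_fsdist P X) (c_gt0 : 0 < c) (XB : [disjoint X & B]%fset)
  (cB : 1 <= c * (size B)%:R).

Let Q := capped_fsdist P X B c.
Let a := excess P X c / (size B)%:R.

Let size_B_gt0 : 0 < (size B)%:R :> R.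
Proof.
by rewrite ltr0n lt0n; apply: contraTN cB => /eqP ->; rewrite mulr0 ler10.
Qed.

Let a_ge0 : 0 <= a.
Proof. by rewrite divr_ge0 ?excess_ge0 ?ltW. Qed.

Let a_le : a <= c.
Proof. by rewrite ler_pdivrMr // (le_trans (excess_le1 HP (ltW c_gt0))). Qed.

Let notin_B y : y \in X -> y \notin B.
Proof. exact: (fdisjointP XB). Qed.

Lemma capped_fsdist_le y : Q y <= c.
Proof.
rewrite /Q /capped_fsdist; case: ifPn => [yX | _].
  by rewrite (negbTE (notin_B yX)) addr0 ge_min lexx orbT.
by rewrite add0r; case: ifP => // _; exact: ltW.
Qed.

Lemma capped_fsdistP : is_fsdist Q (X `|` B)%fset.
Proof.
split; [|split].
- move=> y; apply: addr_ge0; case: ifP => // _.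
  by rewrite le_min (fsdist_ge0 HP) ltW.
- move=> y; rewrite in_fsetU negb_or => /andP[yX yB].
  by rewrite /Q /capped_fsdist (negbTE yX) (negbTE yB) addr0.
rewrite big_split /=.
rewrite -(big_fset_incl _ (fsubsetUl X B)); last by move=> y _ /negbTE ->.
rewrite -(big_fset_incl _ (fsubsetUr X B)); last by move=> y _ /negbTE ->.
have sum_capped : \sum_(y <- X) (if y \in X then Num.min (P y) c else 0) =
    1 - excess P X c.
  rewrite -(fsdist_sum_incl HP (fsubset_refl X)) /excess -sumrB.
  by apply: eq_big_seq => y yX; rewrite yX -subr_min opprB addrC subrK.
have sum_spread : \sum_(y <- B) (if y \in B then a else 0) = excess P X c.
  rewrite (eq_big_seq (fun=> a)); last by move=> y ->.
  by rewrite big_const_seq count_predT iter_addr_0 -mulr_natr mulfVK ?gt_eqF.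
by rewrite sum_capped sum_spread subrK.
Qed.

Lemma dist1_capped_fsdist :
  dist1 P Q ((X `|` B) `|` X)%fset = excess P X c.
Proof.
rewrite (dist1_fsdistE HP capped_fsdistP); apply: eq_big_seq => y yX.
by rewrite /Q /capped_fsdist yX (negbTE (notin_B yX)) addr0 subr_min -maxA maxxx.
Qed.

End CappedFsdist.

Lemma exists_fresh_fset X n : infinite_set [set: T] ->
  exists2 B : {fset T}, [disjoint X & B]%fset & (n <= size B)%N.
Proof.
move=> Tinf.
have [B BX nB] := infinite_set_fset n (infinite_setD Tinf (finite_fset X)).
by exists B => //; apply/fdisjointP_sym => y /BX [_ /negP].
Qed.

Lemma exists_capped_fsdist P X c : infinite_set [set: T] -> is_fsdist P X ->
  0 < c -> exists Q S, [/\ is_fsdist Q S,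
    dist1 P Q (S `|` X)%fset = excess P X c & forall y, Q y <= c].
Proof.
move=> Tinf HP c0.
have [n cn] : exists n : nat, c^-1 < n%:R.
  by exists (Num.Def.archi_bound c^-1); apply: archi_boundP; rewrite invr_ge0 ltW.
have [B XB nB] := exists_fresh_fset X n Tinf.
have cB : 1 <= c * (size B)%:R.
  rewrite -ler_pdivrMl // mulr1.
  by apply/ltW/(lt_le_trans cn); rewrite ler_nat.
exists (capped_fsdist P X B c), (X `|` B)%fset; split.
- exact: capped_fsdistP.
- exact: dist1_capped_fsdist.
- exact: capped_fsdist_le.
Qed.

Lemma le_Hsmooth P X delta c : infinite_set [set: T] -> is_fsdist P X ->
  0 < c -> excess P X c <= delta -> ((- log2 c)%:E <= Hsmooth P X delta)%E.
Proof.
move=> Tinf HP c0 exc_le.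
have [Q [S [HQ dQ Qc]]] := exists_capped_fsdist Tinf HP c0.
apply: (@le_trans _ _ (Hmin Q S)%:E); first by rewrite lee_fin le_Hmin.
by apply: ereal_sup_ubound; exists (Hmin Q S) => //; exists Q, S; rewrite dQ.
Qed.

Lemma Hsmooth_lt P X delta c : is_fsdist P X -> 0 < c ->
  delta < excess P X c -> (Hsmooth P X delta < (- log2 c)%:E)%E.
Proof.
move=> HP c0 exc_gt; set n := (size X).+1.
set eta := (excess P X c - delta) / n%:R.
have eta0 : 0 < eta by rewrite divr_gt0 ?ltr0n // subr_gt0.
have eta_n : eta *+ n = excess P X c - delta.
  by rewrite -mulr_natr mulfVK ?pnatr_eq0.
apply: (@le_lt_trans _ _ (- log2 (c + eta))%:E); last first.
  by rewrite lte_fin ltrN2 ltr_log2 ?posrE ?ltrDl // addr_gt0.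
apply: ge_ereal_sup => _ [_ [Q [S [HQ [dQ ->]]]] <-].
set M := \big[Num.max/0]_(z <- S) Q z.
have M0 : 0 < M := bigmax_fsdist_gt0 HQ.
have excM : excess P X M <= delta.
  exact: le_trans (excess_le_dist1 HP HQ (le_bigmax_fsdist HQ)) dQ.
rewrite lee_fin lerN2 ler_log2 ?posrE ?addr_gt0 // -/M leNgt.
apply/negP => M_lt.
have shift_lt : Num.max (M - c) 0 *+ size X < eta *+ n.
  rewrite mulrSr (@le_lt_trans _ _ (eta *+ size X)) ?ltrDl //.
  by rewrite ler_wMn2r // ge_max (ltW eta0) andbT; lra.
have : excess P X c < delta + eta *+ n.
  exact: le_lt_trans (excess_le_shift P X c M) (ler_ltD excM shift_lt).
by rewrite eta_n addrC subrK ltxx.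
Qed.

End SmoothMinEntropy.

Theorem lemma5 (R : realType) (T : choiceType) (Tinf : infinite_set [set: T])
  (X : {fset T}) (P : T -> R) (HP : is_fsdist P X)
  (delta : R) (hdelta : 0 <= delta) (k : R) :
  (k%:E <= Hsmooth P X delta)%E <->
  \sum_(x <- X) Num.max (P x - 2 `^ (- k)) 0 <= delta.
Proof.
have c0 : 0 < 2 `^ (- k) :> R by rewrite powR_gt0.
have -> : k%:E = (- log2 (2 `^ (- k)))%:E by rewrite log2_powR2 opprK.
split => [Hk | ]; last exact: le_Hsmooth.
by rewrite leNgt; apply/negP => /(Hsmooth_lt HP c0); rewrite ltNge Hk.
Qed.
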